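(* (i) There is $r^\Delta\in R_{\omega\cdot\omega+\omega}$ such that $\sigma(r^\Delta)\in Q_*$ and $\sigma(p\Lsh r^\Delta)\in Q_*$ for all $p\in R$. (ii) There is $r^{\mathrm{mult}}\in R_{\omega\cdot\omega+\omega}$ such that for every $\phi\in Q_*$ there is $r\in R_{\omega\cdot\omega+\omega}$ with $\sigma(r^{\mathrm{mult}})\circ\phi=\sigma(r)$.
   Context: Throughout, $\delta$ denotes a nonzero countable limit ordinal. Terms: variables are $x_{l,k}$ ($l,k\in\omega$), each taking values in $\{0,1\}$. A term $t$ is given by a finite sequence of variables $(v_0,\dots,v_{r-1})$ and a function $F:2^r\to2$; a variable $v$ is identified with the term $((v),\mathrm{id})$. An assignment $a$ maps variables to $\{0,1\}$ and extends to terms by $t\circ a=F(v_0\circ a,\dots,v_{r-1}\circ a)$. A substitution $\phi$ maps variables to terms; $t\circ\phi$ replaces each variable $v$ in $t$ by $\phi(v)$, and $\bar t\circ\phi=(t_i\circ\phi)_i$ for families. Terms are identified modulo $t=^*s$ iff $t\circ a=s\circ a$ for all assignments $a$. A term depends only on variables in $Y$ if it is $=^*$ to a term using only variables from $Y$. A term or variable $s$ is determined by terms $t_0,\dots,t_n$ if for all assignments $a,b$, $(t_i\circ a)_{i\le n}=(t_i\circ b)_{i\le n}$ implies $s\circ a=s\circ b$. $Q_*$: let $\tau(n,m)=n+\tfrac12(n+m)(n+m+1)$ and $(i,j)\unlhd(n,m)$ iff $\tau(i,j)\le\tau(n,m)$. $Q_*$ is the set of squares $\bar t=(t_{n,m})_{n,m\in\omega}$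 of terms with (1) $t_{n,m}$ depends only on $x_{i,j}$ with $(i,j)\unlhd(n,m)$, (2) each $x_{i,j}$ is determined by finitely many $t_{n,m}$; an element $\phi\in Q_*$ is regarded as the substitution $x_{i,j}\mapsto\phi_{i,j}$, and $\bar t\le\bar s$ iff $\bar t=\bar s\circ\phi$ for some $\phi\in Q_*$. The forcing $\tilde P$: a condition $\tilde p$ has height $\mathrm{ht}(\tilde p)<\omega_1$ and consists of, for every limit $\delta<\mathrm{ht}(\tilde p)$ and $n,m,k\in\omega$: a cofinal $\nu_{\delta,n,m}\subseteq\delta$ of order type $\omega$, with $\nu_{\delta,n,m_1}\cap\nu_{\delta,n,m_2}=\emptyset$ for $m_1\ne m_2$; a strictly increasing $j_{\delta,n,m}:\omega\to\omega$; and a surjective $f_{\delta,n,m,k}:2^{[j_{\delta,n,m}(k),\,j_{\delta,n,m}(k+1)-1]}\to2$; ordered by extension. For $\eta$ into $2$ with domain containing $\nu_{\delta,n,m}$, with $\zeta_i$ the $i$-th element of $\nu_{\delta,n,m}$, $g_{\delta,n,m,k}(\eta)=f_{\delta,n,m,k}((\eta(\zeta_i))_{j_{\delta,n,m}(k)\le i<j_{\delta,n,m}(k+1)})$. The set $R$: $R=\bigcup_{\delta<\omega_1}R_{\delta+\omega}$, where $p\in R_{\delta+\omega}$ consists of $\tilde p\in\tilde P$ with $\mathrm{ht}(\tilde p)=\delta+1$ and terms $\bar p=(p_{n,\alpha})_{n\in\omega,\alpha<\delta+\omega}$ such that $p_{n,\delta+m}=x_{n,m}$; for $\alpha<\delta$,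 $p_{n,\alpha}$ depends only on variables $x_{l,k}$ with $l<n$; and for all $n,m\in\omega$ and all limit $\alpha\le\delta$ there is $k_0$ such that for every assignment $a$, $p_{n,\alpha+m}\circ a=g_{\alpha,n,m,k}((p_{n+1,\zeta}\circ a)_{\zeta<\alpha})$ for all $k\ge k_0$ (computed from $\tilde p$). For $p\in R$, $\sigma(p)=(p_{n,m})_{n,m\in\omega}$. Stacking: for $p\in R_{\delta+\omega}$ and $q'\in R_{\delta'+\omega}$, $q=p\Lsh q'\in R_{\delta+\delta'+\omega}$ is defined by: $\tilde q$ agrees with $\tilde p$ on all limit indices $\le\delta$; for limit $\alpha$ with $\omega\le\alpha\le\delta'$, $\nu^q_{\delta+\alpha,n,m}=\{\delta+\beta:\beta\in\nu^{q'}_{\alpha,n,m}\}$, $j^q_{\delta+\alpha,n,m}=j^{q'}_{\alpha,n,m}$, $f^q_{\delta+\alpha,n,m,k}=f^{q'}_{\alpha,n,m,k}$; $q_{n,\delta+\alpha}=q'_{n,\alpha}$ for $\alpha<\delta'+\omega$; and $q_{n,\alpha}=p_{n,\alpha}\circ\phi$ for $\alpha<\delta$, where $\phi(x_{n,m})=q'_{n,m}$. *)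

From mathcomp Require Import all_boot.
Set Implicit Arguments.
Unset Strict Implicit.
Unset Printing Implicit Defensive.

Definition var := (nat * nat)%type.
Definition assignment := var -> bool.

(* Terms are taken modulo =*, i.e. represented by their evaluation map
   a |-> t o a; a genuine term is such a map depending on finitely many
   variables (see [is_term]). *)
Definition term := assignment -> bool.

Definition xvar (v : var) : term := fun a => a v.

Definition uses_only (t : term) (s : seq var) : Prop :=
  forall a b : assignment, (forall v, v \in s -> a v = b v) -> t a = t b.

Definition is_term (t : term) : Prop := exists s : seq var, uses_only t s.

Definition depends_only (t : term) (Y : var -> Prop) : Prop :=
  exists s : seq var, (forall v, v \in s -> Y v) /\ uses_only t s.

Definition subst (t : term) (phi : nat -> nat -> term) : term :=
  fun a => t (fun v => phi v.1 v.2 a).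

Definition tau (n m : nat) : nat := n + ((n + m) * (n + m + 1)) %/ 2.

Definition square := nat -> nat -> term.

Definition Qstar (t : square) : Prop :=
  (forall n m, is_term (t n m)) /\
  (forall n m, depends_only (t n m) (fun v => tau v.1 v.2 <= tau n m)) /\
  (forall i j, exists S : seq (nat * nat),
      forall a b : assignment,
        (forall nm, nm \in S -> t nm.1 nm.2 a = t nm.1 nm.2 b) ->
        a (i, j) = b (i, j)).

Definition sumlt (A B : Type) (ltA : A -> A -> Prop) (ltB : B -> B -> Prop)
  (x y : A + B) : Prop :=
  match x, y with
  | inl a, inl a' => ltA a a'
  | inl _, inr _ => True
  | inr _, inl _ => False
  | inr b, inr b' => ltB b b'
  end.

Definition ltn_rel (m n : nat) : Prop := (m < n)%N.

(* lexicographic order on nat * nat: order type omega * omega *)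
Definition lexlt (x y : nat * nat) : Prop :=
  (x.1 < y.1)%N \/ (x.1 = y.1 /\ (x.2 < y.2)%N).

(* A countable well-order J (possibly empty) without maximum.  The countable
   nonzero limit ordinals delta are exactly the ordinals omega + J for such J. *)
Definition cwo (J : Type) (lt : J -> J -> Prop) : Prop :=
  (forall x, ~ lt x x) /\
  (forall x y z, lt x y -> lt y z -> lt x z) /\
  (forall x y, lt x y \/ x = y \/ lt y x) /\
  well_founded lt /\
  (exists f : J -> nat, injective f) /\
  (forall x, exists y, lt x y).

Section Ord.
Variables (X : Type) (lt : X -> X -> Prop).

Definition is_limit (al : X) : Prop :=
  (exists be, lt be al) /\
  (forall be, lt be al -> exists ga, lt be ga /\ lt ga al).

Definition succ_of (al be : X) : Prop :=
  lt al be /\ forall ga, lt al ga -> ga = be \/ lt be ga.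

Inductive nth_succ : X -> nat -> X -> Prop :=
| ns0 al : nth_succ al 0 al
| nsS al m be ga : nth_succ al m be -> succ_of be ga -> nth_succ al m.+1 ga.
End Ord.

(* Positions (ordinals < delta + omega) : inl (inl m) = m (m < omega),
   inl (inr b) = omega + b, inr m = delta + m. *)
Definition pos (J : Type) := ((nat + J) + nat)%type.

Definition ltpos (J : Type) (ltJ : J -> J -> Prop) : pos J -> pos J -> Prop :=
  sumlt (sumlt ltn_rel ltJ) ltn_rel.

Definition delta_pos (J : Type) : pos J := inr 0.

(* Data of a condition: for a limit position al and n, m, k:
   c_nu al n m i = i-th element of nu_{al,n,m} (increasing enumeration),
   c_j al n m = j_{al,n,m},
   c_f al n m k = f_{al,n,m,k}, taking the list of values
      (eta(zeta_i))_{j(k) <= i < j(k+1)},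
   c_t n al = the term p_{n,al}. *)
Record cond (J : Type) := Cond {
  c_nu : pos J -> nat -> nat -> nat -> pos J;
  c_j : pos J -> nat -> nat -> nat -> nat;
  c_f : pos J -> nat -> nat -> nat -> seq bool -> bool;
  c_t : nat -> pos J -> term }.

Definition gfun (J : Type) (p : cond J) (al : pos J) (n m k : nat)
  (eta : pos J -> bool) : bool :=
  c_f p al n m k
    [seq eta (c_nu p al n m i) |
       i <- iota (c_j p al n m k) (c_j p al n m k.+1 - c_j p al n m k)].

Definition isR (J : Type) (ltJ : J -> J -> Prop) (p : cond J) : Prop :=
  let lt := ltpos ltJ in
  let le x y := lt x y \/ x = y in
  (* the forcing part p~ of height delta+1 *)
  (forall al n m, is_limit lt al -> le al (delta_pos J) ->
     (forall i, lt (c_nu p al n m i) al) /\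
     (forall i, lt (c_nu p al n m i) (c_nu p al n m i.+1)) /\
     (forall be, lt be al -> exists i, le be (c_nu p al n m i)) /\
     (forall m' i i', m <> m' -> c_nu p al n m i <> c_nu p al n m' i') /\
     (forall k, (c_j p al n m k < c_j p al n m k.+1)%N) /\
     (forall k (b : bool), exists s : seq bool,
         size s = (c_j p al n m k.+1 - c_j p al n m k)%N /\
         c_f p al n m k s = b)) /\
  (forall n al, is_term (c_t p n al)) /\
  (forall n m, c_t p n (inr m) =1 xvar (n, m)) /\
  (forall n al, lt al (delta_pos J) ->
     depends_only (c_t p n al) (fun v => (v.1 < n)%N)) /\
  (forall n m al, is_limit lt al -> le al (delta_pos J) ->
     forall be, nth_succ lt al m be ->
     exists k0, forall (a : assignment) k, (k0 <= k)%N ->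
       c_t p n be a = gfun p al n m k (fun ze => c_t p n.+1 ze a)).

Definition sigma (J : Type) (p : cond J) : square :=
  fun n m => c_t p n (inl (inl m)).

(* delta = omega + J, delta' = omega + J'; delta + delta' = omega + (J + (omega + J')). *)
Definition stackJ (J J' : Type) := (J + (nat + J'))%type.

Definition embL (J J' : Type) (x : pos J) : pos (stackJ J J') :=
  match x with
  | inl (inl m) => inl (inl m)
  | inl (inr b) => inl (inr (inl b))
  | inr m => inl (inr (inr (inl m)))
  end.

(* beta |-> delta + beta *)
Definition embR (J J' : Type) (x : pos J') : pos (stackJ J J') :=
  match x with
  | inl (inl m) => inl (inr (inr (inl m)))
  | inl (inr b) => inl (inr (inr (inr b)))
  | inr m => inr m
  end.

(* where the forcing data of q~ at a position comes from *)
Definition stack_src (J J' : Type) (x : pos (stackJ J J')) : pos J + pos J' :=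
  match x with
  | inl (inl m) => inl (inl (inl m))
  | inl (inr (inl b)) => inl (inl (inr b))
  | inl (inr (inr (inl 0))) => inl (inr 0)
  | inl (inr (inr (inl m))) => inr (inl (inl m))
  | inl (inr (inr (inr b))) => inr (inl (inr b))
  | inr m => inr (inr m)
  end.

Definition stack (J J' : Type) (p : cond J) (q' : cond J') : cond (stackJ J J') :=
  Cond
    (fun x n m i => match stack_src x with
                    | inl y => embL J' (c_nu p y n m i)
                    | inr y => embR J (c_nu q' y n m i) end)
    (fun x n m k => match stack_src x with
                    | inl y => c_j p y n m k
                    | inr y => c_j q' y n m k end)
    (fun x n m k => match stack_src x with
                    | inl y => c_f p y n m k
                    | inr y => c_f q' y n m k end)
    (fun n x => match x with
                | inl (inl m) => subst (c_t p n (inl (inl m))) (sigma q')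
                | inl (inr (inl b)) => subst (c_t p n (inl (inr b))) (sigma q')
                | inl (inr (inr y)) => c_t q' n (inl y)
                | inr m => c_t q' n (inr m)
                end).

(* All conditions built here have height omega * omega.  Given [phi] in [Q_*] and, for each
   variable [w], a finite list [S w] of entries of [phi] determining [x_w]: column [i < omega]
   of row [n] holds the entry [phi_w] for the variable [w] coded by [i] (or [false] while
   [w.1 + w.2 >= n]), and column [omega * (a+1) + i] holds [x_w] once [w] is visible at row [n]
   and level [a].  The limit [omega] recovers [x_w] from a block of [phi]-entries in the next
   row, the limit [omega * (a+2)] copies [x_w] from level [a] of the next row, and the top
   limit copies [x_{n,m}] from levels far enough out.  For [phi] the identity this is
   [r_delta]; substituting any [phi] into [sigma r_delta] yields [sigma] of the condition built
   from [phi], so [r_delta] also serves as [r^mult].  Finally every term of a condition [p] in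
   [R] is determined by finitely many entries of [sigma p] (well-founded induction along the
   coherence equations); as [x_{i,j}] is an entry of [sigma r_delta], it is determined by
   finitely many entries of [sigma (stack p r_delta)]. *)

From mathcomp Require Import all_boot zify.
From Stdlib Require Import Classical ClassicalEpsilon Relation_Operators Wellfounded.
From Stdlib Require Cantor Wf_nat.
Set Implicit Arguments.
Unset Strict Implicit.
Unset Printing Implicit Defensive.

Definition enc (w : nat * nat) : nat := Cantor.to_nat w.
Definition dec (c : nat) : nat * nat := Cantor.of_nat c.
Arguments enc : simpl never.
Arguments dec : simpl never.

Lemma encK : cancel enc dec.
Proof. exact: Cantor.cancel_of_to. Qed.

Lemma enc_inj : injective enc.
Proof. exact: can_inj encK. Qed.

Lemma enc_ge (x y : nat) : y <= enc (x, y).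
Proof. have := Cantor.to_nat_non_decreasing x y; rewrite /enc; lia. Qed.

Fixpoint chain (tag : nat -> nat) (m i : nat) : nat :=
  enc (tag i, enc (m, if i is i'.+1 then (chain tag m i').+1 else 0)).

Lemma chain_tag tag m i : (dec (chain tag m i)).1 = tag i.
Proof. by case: i => [|i]; rewrite /= encK. Qed.

Lemma chain_index tag m i : (dec (dec (chain tag m i)).2).1 = m.
Proof. by case: i => [|i]; rewrite /= !encK. Qed.

Lemma chain_inj_index tag tag' m m' i i' :
  chain tag m i = chain tag' m' i' -> m = m'.
Proof. by move=> e; rewrite -(chain_index tag m i) e chain_index. Qed.

Lemma chain_lt tag m i : chain tag m i < chain tag m i.+1.
Proof. exact: leq_trans (enc_ge m _) (enc_ge _ _). Qed.

Lemma chain_ge tag m i : i <= chain tag m i.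
Proof. by elim: i => // i IH; exact: leq_ltn_trans IH (chain_lt _ _ _). Qed.

Definition triangle (s : nat) : nat := (s * (s + 1)) %/ 2.

Lemma triangleS s : triangle s.+1 = triangle s + s.+1.
Proof.
rewrite /triangle; have -> : s.+1 * (s.+1 + 1) = s * (s + 1) + s.+1 * 2 by nia.
by rewrite divnDr ?dvdn_mull // mulnK.
Qed.

Lemma triangle_lt s s' : s < s' -> triangle s + s < triangle s'.
Proof.
elim: s' => // s' IH; rewrite ltnS leq_eqVlt triangleS => /orP [/eqP->|/IH]; lia.
Qed.

Lemma ltn_tau i j n m : i + j < n + m -> tau i j < tau n m.
Proof.
move/triangle_lt; change (tau i j) with (i + triangle (i + j)).
change (tau n m) with (n + triangle (n + m)).
move: (triangle (i + j)) (triangle (n + m)) => ti tn; lia.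
Qed.

Lemma tau_leq_sum i j n m : tau i j <= tau n m -> i + j <= n + m.
Proof. by move=> h; rewrite leqNgt; apply/negP => /ltn_tau; rewrite ltnNge h. Qed.

Lemma wf_sumlt (A B : Type) (ltA : A -> A -> Prop) (ltB : B -> B -> Prop) :
  well_founded ltA -> well_founded ltB -> well_founded (sumlt ltA ltB).
Proof.
move=> wfA wfB; apply: (wf_incl _ _ (le_AsB A B ltA ltB)); last exact: wf_disjoint_sum.
by move=> [a|b] [a'|b'] //= h; constructor.
Qed.

Section Covers.
Variables (X : Type) (lt : X -> X -> Prop).

Definition covers (x y : X) : Prop := lt x y /\ forall g, lt x g -> ~ lt g y.

Lemma succ_of_covers x y z : covers x y -> succ_of lt x z -> z = y.
Proof. by move=> [xy nb] [xz /(_ y xy)] [//|zy]; case: (nb z xz). Qed.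

Lemma nth_succ_iter (s : X -> X) : (forall x, covers x (s x)) ->
  forall al m be, nth_succ lt al m be -> be = iter m s al.
Proof.
by move=> cs al m be; elim=> {al m be} // al m be ga _ -> /(succ_of_covers (cs _)).
Qed.

Lemma covered_of_not_limit y z : lt y z -> ~ is_limit lt z -> exists x, covers x z.
Proof.
move=> yz nl; apply: NNPP => ncov; apply: nl; split; first by exists y.
move=> be bez; apply: NNPP => nbetween; apply: ncov; exists be; split=> // g h1 h2.
by apply: nbetween; exists g.
Qed.

Hypothesis lt_total : forall x y, lt x y \/ x = y \/ lt y x.

Lemma covers_succ_of x y : covers x y -> succ_of lt x y.
Proof.
move=> [xy nb]; split=> // g xg.
by case: (lt_total g y) => [/(nb g xg)|[->|]]; auto.
Qed.

End Covers.

Section Positions.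
Variables (J : Type) (ltJ : J -> J -> Prop).
Hypothesis cwoJ : cwo ltJ.
Local Notation lt := (ltpos ltJ).

Lemma ltpos_wf : well_founded lt.
Proof.
have [_ [_ [_ [wfJ _]]]] := cwoJ.
have wf_ltn : well_founded ltn_rel.
  by apply: (wf_incl _ _ Peano.lt) Wf_nat.lt_wf => x y /ltP.
exact: wf_sumlt (wf_sumlt wf_ltn wfJ) wf_ltn.
Qed.

Lemma ltpos_trans x y z : lt x y -> lt y z -> lt x z.
Proof.
have [_ [trJ _]] := cwoJ.
case: x y z => [[x|x]|x] [[y|y]|y] [[z|z]|z] //=; try exact: trJ; exact: ltn_trans.
Qed.

Lemma ltpos_total x y : lt x y \/ x = y \/ lt y x.
Proof.
have [_ [_ [totJ _]]] := cwoJ.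
case: x y => [[x|x]|x] [[y|y]|y] /=; auto;
  try by case: (ltngtP x y) => [|| ->]; auto.
by case: (totJ x y) => [|[->|]]; auto.
Qed.

Lemma nth_succ_ge al m be : nth_succ lt al m be -> lt al be \/ al = be.
Proof.
elim=> [x|x k y g _ xy [yg _]]; [by right | left].
by case: xy => [xy|->] //; exact: ltpos_trans xy yg.
Qed.

Lemma delta_limit : is_limit lt (delta_pos J).
Proof.
have [_ [_ [_ [_ [_ nomax]]]]] := cwoJ.
split; first by exists (inl (inl 0)).
move=> [[k|b]|k] hb //.
- by exists (inl (inl k.+1)); split=> //=; exact: ltnSn.
- by have [y hy] := nomax b; exists (inl (inr y)).
Qed.

Lemma nth_succ_delta m : nth_succ lt (delta_pos J) m (inr m).
Proof.
elim: m => [|m IH]; first exact: ns0.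
apply: nsS IH (covers_succ_of ltpos_total _).
split=> [|[[g|g]|g]] //=; first exact: ltnSn.
rewrite /ltn_rel; lia.
Qed.

Lemma pos_decomp z : (exists k, z = inl (inl k)) \/
  exists al m, [/\ is_limit lt al, lt al (delta_pos J) \/ al = delta_pos J
                 & nth_succ lt al m z].
Proof.
elim: (ltpos_wf z) => {}z _ IH.
case: z IH => [[k|b]|m] IH; first by left; exists k.
- right; have [hl|nl] := classic (is_limit lt (inl (inr b))).
    by exists (inl (inr b)), 0; split=> //; [left | exact: ns0].
  have [[[k|b']|k] [ylt ynb]] := covered_of_not_limit (y := inl (inl 0)) I nl.
  + by case: (ynb (inl (inl k.+1)) (ltnSn k)).
  + have [[k //]|[al [m [hl hd hs]]]] := IH _ ylt.
    exists al, m.+1; split=> //.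
    by apply: nsS hs (covers_succ_of ltpos_total _).
  + by [].
- right; exists (delta_pos J), m; split; [exact: delta_limit | by right | exact: nth_succ_delta].
Qed.

End Positions.

Definition determined_by (T : Type) (t : square) (f : assignment -> T) : Prop :=
  exists S : seq (nat * nat), forall a b : assignment,
    (forall nm, nm \in S -> t nm.1 nm.2 a = t nm.1 nm.2 b) -> f a = f b.

Lemma determined_by_map T t (f : nat -> assignment -> T) (I : seq nat) :
  (forall i, determined_by t (f i)) ->
  determined_by t (fun a => [seq f i a | i <- I]).
Proof.
move=> fdet; elim: I => [|i I [S hS]]; first by exists [::].
have [Si hi] := fdet i; exists (Si ++ S) => a b hab /=.
by rewrite (hi a b) ?(hS a b) // => nm hnm; apply: hab; rewrite mem_cat hnm ?orbT.
Qed.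

Definition determining (t : square) (S : var -> seq (nat * nat)) : Prop :=
  forall w (a b : assignment),
    (forall nm, nm \in S w -> t nm.1 nm.2 a = t nm.1 nm.2 b) -> a w = b w.

Lemma determining_exists t :
  (forall v, determined_by t (xvar v)) -> exists S, determining t S.
Proof. exact: choice. Qed.

Lemma determined_of_determining t S :
  determining t S -> forall v, determined_by t (xvar v).
Proof. by move=> tS v; exists (S v); exact: tS. Qed.

Lemma term_determined (J : Type) (ltJ : J -> J -> Prop) (p : cond J) :
  cwo ltJ -> isR ltJ p -> forall n z, determined_by (sigma p) (c_t p n z).
Proof.
move=> cwoJ [forcing [_ [_ [_ coherent]]]] n z.
elim: (ltpos_wf cwoJ z) n => {}z _ IH n.
have [[k ->]|[al [m [hl hd hs]]]] := pos_decomp cwoJ z.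
  by exists [:: (n, k)] => a b /(_ (n, k) (mem_head _ _)).
have [k0 hk] := coherent n m al hl hd z hs.
have [nu_lt _] := forcing al n m hl hd.
have nu_lt_z i : ltpos ltJ (c_nu p al n m i) z.
  by case: (nth_succ_ge cwoJ hs) => [alz|<-]; [exact: ltpos_trans (nu_lt i) alz|].
have [S hS] := determined_by_map (iota (c_j p al n m k0)
                 (c_j p al n m k0.+1 - c_j p al n m k0)) (fun i => IH _ (nu_lt_z i) n.+1).
by exists S => a b hab; rewrite !(hk _ k0) // /gfun (hS a b hab).
Qed.

Lemma var_determined (J : Type) (ltJ : J -> J -> Prop) (p : cond J) :
  cwo ltJ -> isR ltJ p -> forall v, determined_by (sigma p) (xvar v).
Proof.
move=> cwoJ pR [n m]; have [S hS] := term_determined cwoJ pR n (inr m).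
have [_ [_ [xvarE _]]] := pR.
by exists S => a b /hS; rewrite !xvarE.
Qed.

Local Notation P := (pos (nat * nat)).
Local Notation plt := (ltpos lexlt).

Definition pos_succ (x : P) : P :=
  match x with
  | inl (inl k) => inl (inl k.+1)
  | inl (inr (a, i)) => inl (inr (a, i.+1))
  | inr k => inr k.+1
  end.

Lemma covers_pos_succ x : covers plt x (pos_succ x).
Proof.
case: x => [[k|[a i]]|k]; split=> [|[[g|[b j]]|g]] //=; rewrite /ltn_rel /lexlt /=; lia.
Qed.

Lemma not_limit_pos_succ x : ~ is_limit plt (pos_succ x).
Proof.
have [x_lt nb] := covers_pos_succ x.
by case=> _ /(_ x x_lt) [g [h1 h2]]; exact: nb h1 h2.
Qed.

Lemma limit_posE (al : P) : is_limit plt al -> plt al (inr 0) \/ al = inr 0 ->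
  (exists a, al = inl (inr (a, 0))) \/ al = inr 0.
Proof.
case: al => [[[|k]|[a [|i]]]|[|i]] hl hd.
- by case: hl => -[[[k|?]|?]] //=; rewrite /ltn_rel ltn0.
- by case: (@not_limit_pos_succ (inl (inl k)) hl).
- by left; exists a.
- by case: (@not_limit_pos_succ (inl (inr (a, i))) hl).
- by right.
- by case: hd => [|[]] //=; rewrite /ltn_rel ltn0.
Qed.

Lemma nth_succ_blockE a m be :
  nth_succ plt (inl (inr (a, 0))) m be -> be = inl (inr (a, m)).
Proof. by move/(nth_succ_iter covers_pos_succ) ->; elim: m => //= m ->. Qed.

Lemma nth_succ_deltaE m be : nth_succ plt (inr 0) m be -> be = inr m.
Proof. by move/(nth_succ_iter covers_pos_succ) ->; elim: m => //= m ->. Qed.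

Lemma depends_only_term t Y : depends_only t Y -> is_term t.
Proof. by move=> [s [_ ts]]; exists s. Qed.

Lemma depends_only_weaken t (Y Z : var -> Prop) :
  (forall v, Y v -> Z v) -> depends_only t Y -> depends_only t Z.
Proof. by move=> YZ [s [sY ts]]; exists s; split=> // v /sY /YZ. Qed.

Lemma xvar_depends v (Y : var -> Prop) : Y v -> depends_only (xvar v) Y.
Proof.
by move=> Yv; exists [:: v]; split=> [w /[1!inE] /eqP -> //|a b /(_ v (mem_head _ _))].
Qed.

Lemma subst_depends t (ph : square) (Y Z : var -> Prop) :
  depends_only t Y -> (forall v, Y v -> depends_only (ph v.1 v.2) Z) ->
  depends_only (subst t ph) Z.
Proof.
move=> [s [sY ts]] phZ.
have [s' [s'Z s'u]] : exists s', (forall w, w \in s' -> Z w) /\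
    forall v, v \in s -> uses_only (ph v.1 v.2) s'.
  elim: s sY {ts} => [|v s IH] sY; first by exists [::].
  have [sv [svZ svu]] := phZ v (sY v (mem_head _ _)).
  have [s' [s'Z s'u]] := IH (fun w h => sY w (predU1r w v h)).
  exists (sv ++ s'); split=> [w|w /[1!inE] /orP [/eqP -> | /s'u wu] a b ab].
  - by rewrite mem_cat => /orP [/svZ|/s'Z].
  - by apply: svu => x hx; apply: ab; rewrite mem_cat hx.
  - by apply: wu => x hx; apply: ab; rewrite mem_cat hx orbT.
by exists s'; split=> // a b ab; apply: ts => v /s'u vu; exact: vu a b ab.
Qed.

Definition col_var (i : nat) : var := dec (dec i).1.

Lemma col_var_chain tag m i : col_var (chain tag m i) = dec (tag i).
Proof. by rewrite /col_var chain_tag. Qed.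

Lemma col_var_enc w k : col_var (enc (enc w, k)) = w.
Proof. by rewrite /col_var !encK. Qed.

Lemma take_block (T : Type) (x0 : T) (h : T -> bool) (s : seq T) k :
  take (size s) [seq h (nth x0 s (i %% (size s).+1)) | i <- iota (k * (size s).+1) (size s).+1]
  = map h s.
Proof.
rewrite -[k * _]addn0 iotaDl -map_comp.
transitivity (take (size s) [seq h (nth x0 s i) | i <- iota 0 (size s).+1]).
  congr take; apply/eq_in_map => i; rewrite mem_iota add0n => lt_i /=.
  by rewrite modnMDl modn_small.
rewrite -addn1 iotaD map_cat take_size_cat ?size_map ?size_iota //.
by rewrite -[in RHS](mkseq_nth x0 s) /mkseq -map_comp.
Qed.

Definition forcing_at (J : Type) (ltJ : J -> J -> Prop) (p : cond J) (al : pos J)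
    (n m : nat) : Prop :=
  let lt := ltpos ltJ in
  (forall i, lt (c_nu p al n m i) al) /\
  (forall i, lt (c_nu p al n m i) (c_nu p al n m i.+1)) /\
  (forall be, lt be al -> exists i, lt be (c_nu p al n m i) \/ be = c_nu p al n m i) /\
  (forall m' i i', m <> m' -> c_nu p al n m i <> c_nu p al n m' i') /\
  (forall k, c_j p al n m k < c_j p al n m k.+1) /\
  (forall k (b : bool), exists s : seq bool,
     size s = c_j p al n m k.+1 - c_j p al n m k /\ c_f p al n m k s = b).

Section Construction.
Variables (phi : square) (S : var -> seq (nat * nat)).

Definition depth (w : var) : nat := \max_(nm <- S w) (nm.1 + nm.2).+1.

Lemma depth_gt w nm : nm \in S w -> nm.1 + nm.2 < depth w.
Proof. by move=> nm_in; exact: leq_bigmax_seq. Qed.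

Definition visible (L a : nat) (w : var) : bool := (w.1 < L) && (depth w <= L + a).

Definition entry_below (L : nat) (w : var) : term :=
  fun asg => (w.1 + w.2 < L) && phi w.1 w.2 asg.

Definition visible_var (L a : nat) (w : var) : term :=
  fun asg => visible L a.+1 w && asg w.

(* One padding entry keeps the block lengths, hence [j], strictly increasing even when
   [S w] is empty. *)
Definition blen (w : var) : nat := (size (S w)).+1.

Definition recover (w : var) (s : seq bool) : bool :=
  epsilon (inhabits (fun _ => false))
    (fun asg : assignment => [seq phi nm.1 nm.2 asg | nm <- S w] = s) w.

(* The variable [(n.+1, 0)] is invisible at row [n.+1] and its entry there is [false]. *)
Definition tag_omega (n m i : nat) : nat :=
  let w := col_var m in
  enc (if visible n 1 w then nth (0, 0) (S w) (i %% blen w) else (n.+1, 0)).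

Definition tag_block (n a m : nat) : nat :=
  let w := col_var m in enc (if visible n a.+2 w then w else (n.+1, 0)).

(* Only the limits [omega * (a+1) = inl (inr (a, 0))] and [inr 0] are constrained by [isR];
   the forcing data elsewhere are arbitrary. *)
Definition cond_of : cond (nat * nat) :=
  Cond
   (fun al n m i => match al with
    | inl (inl _) => al
    | inl (inr (0, _)) => inl (inl (chain (tag_omega n m) m i))
    | inl (inr (a.+1, _)) => inl (inr (a, chain (fun _ => tag_block n a m) m i))
    | inr _ => inl (inr (depth (n, m) + i, enc (enc (n, m), 0)))
    end)
   (fun al n m k => match al with
    | inl (inr (0, _)) => k * blen (col_var m)
    | _ => k
    end)
   (fun al n m k s => match al with
    | inl (inr (0, _)) =>
        if visible n 1 (col_var m) then recover (col_var m) (take (size (S (col_var m))) s)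
        else head false s
    | _ => head false s
    end)
   (fun n x => match x with
    | inl (inl i) => entry_below n (col_var i)
    | inl (inr (a, i)) => visible_var n a (col_var i)
    | inr m => xvar (n, m)
    end).

Hypothesis phi_dep : forall n m, depends_only (phi n m) (fun v => tau v.1 v.2 <= tau n m).
Hypothesis S_det : determining phi S.

Lemma recover_spec w asg : recover w [seq phi nm.1 nm.2 asg | nm <- S w] = asg w.
Proof.
rewrite /recover; apply: S_det; apply/eq_in_map.
exact: (epsilon_spec _ (fun a : assignment => [seq phi nm.1 nm.2 a | nm <- S w] = _)
          (ex_intro _ asg erefl)).
Qed.

Lemma entry_below_depends L w : depends_only (entry_below L w) (fun v => v.1 + v.2 < L).
Proof.
rewrite /entry_below; case: ltnP => w_lt; last by exists [::].
have [s [s_le s_uses]] := phi_dep w.1 w.2.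
by exists s; split=> [v /s_le /tau_leq_sum|a b /s_uses ->]; first lia.
Qed.

Lemma visible_var_depends L a w : depends_only (visible_var L a w) (fun v => v.1 < L).
Proof.
rewrite /visible_var; case: (boolP (visible L a.+1 w)) => [/andP [w_lt _]|_].
  by apply: xvar_depends.
by exists [::].
Qed.

Lemma forcing_omega n m : forcing_at lexlt cond_of (inl (inr (0, 0))) n m.
Proof.
do !split=> //=.
- by move=> i; exact: chain_lt.
- by move=> [[k _|[x y]]|//]; [exists k.+1; left; exact: chain_ge | rewrite /lexlt /=; lia].
- by move=> m' i i' neq_m [/chain_inj_index].
- by move=> k; rewrite /blen mulSn; lia.
move=> k b; rewrite /blen mulSn addnK; case: (boolP (visible n 1 (col_var m))) => vis.
  exists (rcons [seq phi nm.1 nm.2 (fun _ => b) | nm <- S (col_var m)] b).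
  by rewrite size_rcons size_map -cats1 take_size_cat ?size_map // recover_spec.
by exists (b :: nseq (size (S (col_var m))) false); rewrite /= size_nseq.
Qed.

Lemma forcing_block a n m : forcing_at lexlt cond_of (inl (inr (a.+1, 0))) n m.
Proof.
do !split=> //=.
- by move=> i; left.
- by move=> i; right; split=> //; exact: chain_lt.
- move=> [[k _|[x y] /= [lt_x|[]]]|//]; first by exists 0; left.
    have [->|neq_xa] := eqVneq x a.
      by exists y.+1; left; right; split=> //; exact: chain_ge.
    by exists 0; left; left; rewrite /= ltn_neqAle neq_xa -ltnS.
  by [].
- by move=> m' i i' neq_m [/chain_inj_index].
- by move=> k b; exists [:: b]; rewrite subSnn.
Qed.

Lemma forcing_delta n m : forcing_at lexlt cond_of (inr 0) n m.
Proof.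
do !split=> //=.
- by move=> i; left => /=; rewrite addnS.
- move=> [[k _|[x y] _]|//]; first by exists 0; left.
  by exists x.+1; left; left => /=; lia.
- by move=> m' i i' neq_m [_ /enc_inj /pair_equal_spec [/enc_inj [] /neq_m]].
- by move=> k b; exists [:: b]; rewrite subSnn.
Qed.

Lemma coherent_omega n m k asg :
  c_t cond_of n (inl (inr (0, m))) asg =
  gfun cond_of (inl (inr (0, 0))) n m k (fun z => c_t cond_of n.+1 z asg).
Proof.
rewrite /gfun /= /blen mulSn addnK /visible_var.
case: (boolP (visible n 1 (col_var m))) => vis.
  under eq_map do rewrite col_var_chain /tag_omega vis encK /blen.
  rewrite (take_block _ (fun nm => entry_below n.+1 nm asg)) /= -recover_spec.
  congr recover; apply/eq_in_map => nm /depth_gt.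
  move: vis => /andP [_ w_depth] nm_lt; rewrite /entry_below.
  by suff -> : nm.1 + nm.2 < n.+1 by []; lia.
by rewrite /= col_var_chain /tag_omega (negbTE vis) encK /entry_below /= addn0 ltnn.
Qed.

Lemma coherent_block a n m k asg :
  c_t cond_of n (inl (inr (a.+1, m))) asg =
  gfun cond_of (inl (inr (a.+1, 0))) n m k (fun z => c_t cond_of n.+1 z asg).
Proof.
rewrite /gfun /= subSnn /= col_var_chain /tag_block encK /visible_var.
case: (boolP (visible n a.+2 (col_var m))) => vis /=; last by rewrite /visible /= ltnn.
suff -> : visible n.+1 a.+1 (col_var m) by [].
by move: vis; rewrite /visible => /andP [w_lt w_depth]; apply/andP; split; lia.
Qed.

Lemma coherent_delta n m k asg :
  c_t cond_of n (inr m) asg =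
  gfun cond_of (inr 0) n m k (fun z => c_t cond_of n.+1 z asg).
Proof.
rewrite /gfun /= subSnn /= col_var_enc /visible_var.
suff -> : visible n.+1 (depth (n, m) + k).+1 (n, m) by [].
by rewrite /visible /=; apply/andP; split; lia.
Qed.

Lemma cond_of_isR : isR lexlt cond_of.
Proof.
have depends n al : ltpos lexlt al (inr 0) ->
    depends_only (c_t cond_of n al) (fun v => v.1 < n).
  case: al => [[i|[a i]]|//] _; last exact: visible_var_depends.
  by apply: depends_only_weaken (entry_below_depends _ _) => v; lia.
split.
  move=> al n m hl hd; have [[[|a] ->]|->] := limit_posE hl hd.
  - exact: forcing_omega.
  - exact: forcing_block.
  - exact: forcing_delta.
split.
  move=> n [[i|[a i]]|m]; apply: depends_only_term; [exact: depends | exact: depends |].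
  exact: (@xvar_depends _ (fun _ => True)).
split; first by [].
split; first exact: depends.
move=> n m al hl hd be hs; exists 0 => asg k _.
have [[[|a] ea]|ed] := limit_posE hl hd; subst al.
- rewrite (nth_succ_blockE hs); exact: coherent_omega.
- rewrite (nth_succ_blockE hs); exact: coherent_block.
- rewrite (nth_succ_deltaE hs); exact: coherent_delta.
Qed.

End Construction.

Definition id_square : square := fun n m => xvar (n, m).

Lemma id_square_depends n m :
  depends_only (id_square n m) (fun v => tau v.1 v.2 <= tau n m).
Proof. exact: xvar_depends. Qed.

Lemma id_square_determining : determining id_square (fun w => [:: w]).
Proof. by move=> w a b /(_ w (mem_head _ _)); rewrite /id_square -surjective_pairing. Qed.

Definition r_delta : cond (nat * nat) := cond_of id_square (fun w => [:: w]).

Lemma r_delta_isR : isR lexlt r_delta.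
Proof. exact: cond_of_isR id_square_depends id_square_determining. Qed.

Lemma sigma_r_delta_code i j a : sigma r_delta (i + j).+1 (enc (enc (i, j), 0)) a = a (i, j).
Proof. by rewrite /sigma /= col_var_enc /entry_below /= ltnSn. Qed.

Lemma Qstar_subst_delta (t : square) :
  (forall n m, depends_only (t n m) (fun v => v.1 <= n)) ->
  (forall v, determined_by t (xvar v)) ->
  Qstar (fun n m => subst (t n m) (sigma r_delta)).
Proof.
move=> t_dep t_det.
have dep n m : depends_only (subst (t n m) (sigma r_delta)) (fun w => tau w.1 w.2 <= tau n m).
  apply: subst_depends (t_dep n m) _ => v v_le.
  apply: depends_only_weaken (entry_below_depends id_square_depends _ _) => w w_lt.
  by apply/ltnW/ltn_tau; lia.
split; first by move=> n m; exact: depends_only_term (dep n m).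
split; first exact: dep.
move=> i j; have [S hS] := t_det ((i + j).+1, enc (enc (i, j), 0)).
exists S => a b hab; rewrite -(sigma_r_delta_code i j a) -(sigma_r_delta_code i j b).
exact: (hS (fun v => sigma r_delta v.1 v.2 a) (fun v => sigma r_delta v.1 v.2 b) hab).
Qed.

Lemma Qstar_sigma_delta : Qstar (sigma r_delta).
Proof.
apply: (@Qstar_subst_delta id_square); first by move=> n m; exact: xvar_depends.
exact: determined_of_determining id_square_determining.
Qed.

Lemma sigma_stack (J J' : Type) (p : cond J) (q : cond J') :
  sigma (stack p q) = fun n m => subst (sigma p n m) (sigma q).
Proof. by []. Qed.

Lemma Qstar_stack_delta (J : Type) (ltJ : J -> J -> Prop) (p : cond J) :
  cwo ltJ -> isR ltJ p -> Qstar (sigma (stack p r_delta)).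
Proof.
move=> cwoJ pR; rewrite sigma_stack; apply: Qstar_subst_delta; last exact: var_determined cwoJ pR.
have [_ [_ [_ [p_dep _]]]] := pR.
by move=> n m; apply: depends_only_weaken (p_dep n (inl (inl m)) I) => v /ltnW.
Qed.

Lemma subst_sigma_delta phi S n m :
  subst (sigma r_delta n m) phi =1 sigma (cond_of phi S) n m.
Proof. by []. Qed.

Theorem mainTheorem15 :
  (exists rD : cond (nat * nat),
     isR lexlt rD /\ Qstar (sigma rD) /\
     (forall (J : Type) (ltJ : J -> J -> Prop) (p : cond J),
        cwo ltJ -> isR ltJ p -> Qstar (sigma (stack p rD)))) /\
  (exists rM : cond (nat * nat),
     isR lexlt rM /\
     (forall phi : square, Qstar phi ->
        exists r : cond (nat * nat),
          isR lexlt r /\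
          (forall n m, subst (sigma rM n m) phi =1 sigma r n m))).
Proof.
split.
  exists r_delta; split; first exact: r_delta_isR.
  by split; [exact: Qstar_sigma_delta | exact: Qstar_stack_delta].
exists r_delta; split; first exact: r_delta_isR.
move=> phi [_ [phi_dep phi_det]].
have [S S_det] := determining_exists (t := phi) (fun '(i, j) => phi_det i j).
exists (cond_of phi S); split; first exact: cond_of_isR.
exact: subst_sigma_delta.
Qed.
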